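(* Let $\mathbf{X}$ be a Banach space and $\mathcal{S}\subset\mathbf{X}$. If $\mathbb{P}$ is a Borel probability measure on $\mathcal{S}$ of growth order $s_0\in[0,\infty)$, then for every $s>s_0$ and every codec $\mathcal{C}=((E_R,D_R))_{R\in\mathbb{N}}$ we have $\mathbb{P}^\ast(\mathcal{A}^s_{\mathcal{S},\mathbf{X}}(\mathcal{C}))=0$.
   Context: Let $(\mathbf{X},\|\cdot\|_{\mathbf{X}})$ be a real Banach space and $\mathcal{S}\subset\mathbf{X}$. A codec is a sequence $\mathcal{C}=((E_R,D_R))_{R\in\mathbb{N}}$ of maps $E_R:\mathcal{S}\to\{0,1\}^R$, $D_R:\{0,1\}^R\to\mathbf{X}$. For $s\ge0$, $\mathcal{A}^s_{\mathcal{S},\mathbf{X}}(\mathcal{C})=\{\mathbf{x}\in\mathcal{S}:\sup_{R\in\mathbb{N}}R^s\|\mathbf{x}-D_R(E_R(\mathbf{x}))\|_{\mathbf{X}}<\infty\}$. $\mathcal{S}$ carries the trace of the Borel $\sigma$-algebra of $\mathbf{X}$; $\mathbb{P}^\ast$ is the induced outer measure $\mathbb{P}^\ast(M)=\inf\{\sum_n\mathbb{P}(M_n):M_n\text{ measurable},M\subset\bigcup_nM_n\}$. $\mathbb{P}$ has (logarithmic) growth order $s_0$ w.r.t. $\mathbf{X}$ if for every $s>s_0$ there exist $\varepsilon_0,c>0$ with $\mathbb{P}(\mathcal{S}\cap\mathcal{B}(\mathbf{x},\varepsilon;\mathbf{X}))\le2^{-c\varepsilon^{-1/s}}$ for all $\mathbf{x}\in\mathbf{X}$,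 $\varepsilon\in(0,\varepsilon_0)$, where $\mathcal{B}(\mathbf{x},\varepsilon;\mathbf{X})$ is the closed ball. *)

From HB Require Import structures.
From mathcomp Require Import all_boot all_order all_algebra.
From mathcomp Require Import all_classical all_reals all_analysis.
Set Implicit Arguments. Unset Strict Implicit. Unset Printing Implicit Defensive.
Import Order.TTheory GRing.Theory Num.Theory.
Import numFieldNormedType.Exports.
Local Open Scope classical_set_scope.
Local Open Scope ring_scope.

Section Trace.
Variables (R : realType) (X : normedModType R) (S : set X) (x0 : X) (hx0 : S x0).

Definition subS_of (h : S x0) := {x : X | S x}.
Definition subS := subS_of hx0.
HB.instance Definition _ := gen_eqMixin subS.
HB.instance Definition _ := gen_choiceMixin subS.
HB.instance Definition _ := isPointed.Build subS (exist _ x0 hx0).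

Definition borelX : set (set X) := <<s (@open X) >>.

Definition trace_sets : set (set subS) :=
  [set A | exists B, borelX B /\ A = (@proj1_sig X S) @^-1` B].

(* S equipped with the trace sigma-algebra (generated by trace_sets, which is
   already a sigma-algebra, so the generation does not add sets). *)
Definition traceS := g_sigma_algebraType trace_sets.

Definition induced_outer_measure (P : set traceS -> \bar R) (M : set traceS) : \bar R :=
  ereal_inf [set (\sum_(n <oo) P (F n))%E | F in
    [set F : nat -> set traceS | (forall n, measurable (F n)) /\
                                 M `<=` \bigcup_n F n]].

Definition growth_order (P : set traceS -> \bar R) (s0 : R) : Prop :=
  forall s : R, s0 < s ->
    exists eps0 c : R, 0 < eps0 /\ 0 < c /\
      forall (x : X) (eps : R), 0 < eps -> eps < eps0 ->
        (P ((@proj1_sig X S) @^-1` closed_ball_ (@Num.norm _ X) x eps)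
          <= ((2 : R) `^ (- (c * eps `^ (- s^-1))))%:E)%E.

Record codec := Codec {
  enc : forall n : nat, subS -> n.-tuple bool;
  dec : forall n : nat, n.-tuple bool -> X }.

Definition approx_class (C : codec) (s : R) : set traceS :=
  [set x | exists M : R, forall n : nat, (0 < n)%N ->
     (n%:R `^ s) * `|(proj1_sig (x : subS)) - @dec C n (@enc C n x)| <= M].

End Trace.

Arguments subS_of {R X} S x0 h.
Arguments subS {R X} S {x0} hx0.
Arguments traceS {R X} S {x0} hx0.
Arguments codec {R X} S {x0} hx0.
Arguments induced_outer_measure {R X S x0 hx0} P M.
Arguments growth_order {R X S x0 hx0} P s0.
Arguments approx_class {R X S x0 hx0} C s.

(* Fix t with s0 < t < s (so t > 0, as s0 >= 0): small balls of radius r have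
   mass at most 2^(-c r^(-1/t)).  If n^s |x - D_n(E_n x)| <= M for all n, then
   for every n the point x lies in one of the 2^n closed balls of radius
   M n^(-s) around the decoded codewords D_n(w), of total mass at most
   2^n 2^(-c M^(-1/t) n^(s/t)).  As s/t > 1 this tends to 0, so for the bound
   M = k + 1 some length n = N_k makes it at most e 2^(-k-1); over all k these
   balls cover A^s(C) with total mass at most e. *)
From HB Require Import structures.
From mathcomp Require Import all_boot all_order all_algebra.
From mathcomp Require Import all_classical all_reals all_analysis.
From mathcomp Require Import lra.
Set Implicit Arguments. Unset Strict Implicit.
Import Order.TTheory GRing.Theory Num.Theory.
Import numFieldNormedType.Exports.
Local Open Scope classical_set_scope.
Local Open Scope ring_scope.

Section Asymptotics.
Variable R : realType.

Lemma le_powR_of_powRV (p y z : R) :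
  0 < p -> 0 <= y -> 0 <= z -> y `^ p^-1 <= z -> y <= z `^ p.
Proof.
move=> p_gt0 y_ge0 z_ge0 yz.
have -> : y = (y `^ p^-1) `^ p by rewrite -powRrM mulVf ?gt_eqF // powRr1.
by apply: ge0_ler_powR => //; [exact: ltW | rewrite nnegrE powR_ge0].
Qed.

Lemma near_infty_le_powR (y p : R) : 0 < p -> 0 <= y ->
  \forall n \near \oo, y <= n%:R `^ p.
Proof.
move=> p_gt0 y_ge0; near=> n; apply: le_powR_of_powRV => //.
by near: n; exact: nbhs_infty_ger.
Unshelve. all: by end_near. Qed.

Lemma near_infty_mulr_powRN_lt (M s e : R) : 0 < s -> 0 < e ->
  \forall n \near \oo, M * n%:R `^ (- s) < e.
Proof.
move=> s_gt0 e_gt0; near=> n.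
have n_gt0 : 0 < n%:R :> R by rewrite ltr0n; near: n; exact: nbhs_infty_gt.
rewrite powRN mulrC ltr_pdivrMl ?powR_gt0 // -ltr_pdivrMr //.
suff : `|M / e| + 1 <= n%:R `^ s by have := ler_norm (M / e); lra.
by near: n; apply: near_infty_le_powR => //; rewrite addr_ge0.
Unshelve. all: by end_near. Qed.

Lemma near_infty_codebook_mass_le (a b d : R) : 1 < a -> 0 < b -> 0 < d ->
  \forall n \near \oo, (2 ^ n)%:R * 2 `^ (- (b * n%:R `^ a)) <= d.
Proof.
move=> a_gt1 b_gt0 d_gt0; near=> n.
have two_n_le : 2 * n%:R <= b * n%:R `^ a.
  rewrite -mulr_powRB1 ?(lt_trans ltr01) // mulrCA [2 * _]mulrC ler_wpM2l //.
  rewrite -ler_pdivrMl //; near: n.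
  apply: near_infty_le_powR; first by rewrite subr_gt0.
  by rewrite mulr_ge0 // invr_ge0 ltW.
apply: (@le_trans _ _ ((2 ^ n)%:R * 2 `^ (- (2 * n%:R)))).
  by rewrite ler_pM2l ?ltr0n ?expn_gt0 // ler_powR ?ler1n // lerN2.
rewrite natrX -powR_mulrn // -powRD ?pnatr_eq0 ?implybT //.
have -> : n%:R - 2 * n%:R = - n%:R :> R by lra.
rewrite powRN powR_mulrn // -div1r ltW //; near: n.
exact: (near_infty_natSinv_expn_lt (PosNum d_gt0)).
Unshelve. all: by end_near. Qed.

Lemma exists_codebook_length (c t s M eps0 d : R) :
  0 < c -> 0 < t -> t < s -> 0 < M -> 0 < eps0 -> 0 < d ->
  exists n : nat, [/\ (0 < n)%N, M * n%:R `^ (- s) < eps0 &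
    (2 ^ n)%:R * 2 `^ (- (c * (M * n%:R `^ (- s)) `^ (- t^-1))) <= d].
Proof.
move=> c_gt0 t_gt0 ts M_gt0 eps0_gt0 d_gt0.
suff /filter_ex[n ?] : \forall n \near \oo, [/\ (0 < n)%N,
    M * n%:R `^ (- s) < eps0 &
    (2 ^ n)%:R * 2 `^ (- (c * (M * n%:R `^ (- s)) `^ (- t^-1))) <= d].
  by exists n.
near=> n; split.
- by near: n; exact: nbhs_infty_gt.
- by near: n; apply: near_infty_mulr_powRN_lt => //; exact: lt_trans ts.
have -> : (M * n%:R `^ (- s)) `^ (- t^-1) = M `^ (- t^-1) * n%:R `^ (s / t).
  by rewrite powRM ?powR_ge0 ?ltW // -powRrM mulrNN.
rewrite mulrA; near: n; apply: near_infty_codebook_mass_le.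
- by rewrite ltr_pdivlMr // mul1r.
- by rewrite mulr_gt0 // powR_gt0.
- exact: d_gt0.
Unshelve. all: by end_near. Qed.

End Asymptotics.

Section Codebook.
Variables (R : realType) (X : normedModType R) (S : set X) (x0 : X) (hx0 : S x0).

Local Notation T := (traceS S hx0).

Definition trace_ball (x : X) (r : R) : set T :=
  (@proj1_sig X S) @^-1` closed_ball_ (@Num.norm _ X) x r.

Definition codebook_cover (C : codec S hx0) (n : nat) (r : R) : set T :=
  \bigcup_(w in [set: n.-tuple bool]) trace_ball (dec C w) r.

Lemma measurable_trace_ball x r : measurable (trace_ball x r).
Proof.
apply: sub_gen_smallest; exists (closed_ball_ (@Num.norm _ X) x r); split => //.
rewrite /borelX -[closed_ball_ _ _ _]setCK; apply: sigma_algebraC.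
by apply: sub_gen_smallest; apply: closed_openC; exact: closed_closed_ball_.
Qed.

Lemma measurable_codebook_cover C n r : measurable (codebook_cover C n r).
Proof.
apply: fin_bigcup_measurable; first exact: finite_finset.
by move=> w _; exact: measurable_trace_ball.
Qed.

Lemma codebook_cover_le (P : {content set T -> \bar R}) C n r (b : R) :
  (forall x, (P (trace_ball x r) <= b%:E)%E) ->
  (P (codebook_cover C n r) <= ((2 ^ n)%:R * b)%:E)%E.
Proof.
move=> ball_le.
apply: le_trans (@content_sub_fsum _ _ _ P _ [set: n.-tuple bool] _
  (fun w => trace_ball (dec C w) r) finite_finset _
  (measurable_codebook_cover C n r) _) _.
- by move=> w _; exact: measurable_trace_ball.
- by [].
apply: (@le_trans _ _ (\sum_(w \in [set: n.-tuple bool]) b%:E)%R).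
  by apply: lee_fsum; [exact: finite_finset | move=> w _; exact: ball_le].
rewrite fsumEFin ?lee_fin; last exact: finite_finset.
rewrite (fsbigE (enum {: n.-tuple bool})) ?enum_uniq //; last by move=> w; rewrite mem_enum.
under eq_bigl do rewrite in_setT.
by rewrite big_enum /= sumr_const card_tuple card_bool mulr_natl.
Qed.

Lemma approx_class_sub_codebook_covers C s (N : nat -> nat) :
  (forall k, (0 < N k)%N) ->
  approx_class C s `<=`
    \bigcup_k codebook_cover C (N k) (k.+1%:R * (N k)%:R `^ (- s)).
Proof.
move=> N_gt0 x [M Mx].
have := archi_boundP (normr_ge0 M); set k := Num.Def.archi_bound `|M| => Mk.
exists k => //; exists (enc C (N k) x) => //.
rewrite /trace_ball /closed_ball_ /= distrC powRN ler_pdivlMr ?powR_gt0 ?ltr0n //.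
rewrite mulrC; apply: (le_trans (Mx _ (N_gt0 k))).
by apply: (le_trans (ler_norm M)); apply: (le_trans (ltW Mk)); rewrite ler_nat.
Qed.

Lemma induced_outer_measure_eq0 (P : {measure set T -> \bar R}) (A : set T) :
  (forall e : R, 0 < e -> exists F : nat -> set T,
    [/\ forall k, measurable (F k), A `<=` \bigcup_k F k &
        forall k, (P (F k) <= (e / (2 ^ k.+1)%:R)%:E)%E]) ->
  induced_outer_measure P A = 0%E.
Proof.
move=> small_covers; apply/eqP; rewrite eq_le; apply/andP; split; last first.
  apply/ereal_infP => _ [F _ <-].
  by apply: nneseries_ge0 => k _ _; exact: measure_ge0.
apply/lee_addgt0Pr => e e_gt0; rewrite add0e.
have [F [mF AF PF]] := small_covers e e_gt0.
apply: ge_ereal_inf; exists (\sum_(k <oo) P (F k))%E; first by exists F.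
apply: le_trans (epsilon_trick0 xpredT (ltW e_gt0)).
by apply: lee_nneseries => [k _ _|k _]; [exact: measure_ge0 | exact: PF].
Qed.

End Codebook.

Theorem proposition2p4 (R : realType) (X : completeNormedModType R) (S : set X)
  (x0 : X) (hx0 : S x0) (P : probability (traceS S hx0) R) (s0 : R) :
  0 <= s0 -> growth_order P s0 ->
  forall (s : R), s0 < s ->
  forall (C : codec S hx0), induced_outer_measure P (approx_class C s) = 0%E.
Proof.
move=> s0_ge0 growth s s0_lt_s C.
pose t := (s0 + s) / 2.
have t_gt0 : 0 < t by rewrite /t; lra.
have t_lt_s : t < s by rewrite /t; lra.
have [eps0 [c [eps0_gt0 [c_gt0 ball_le]]]] := growth t ltac:(rewrite /t; lra).
apply: induced_outer_measure_eq0 => e e_gt0.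
have /choice[N HN] k : exists n : nat, [/\ (0 < n)%N,
    k.+1%:R * n%:R `^ (- s) < eps0 &
    (2 ^ n)%:R * 2 `^ (- (c * (k.+1%:R * n%:R `^ (- s)) `^ (- t^-1)))
      <= e / (2 ^ k.+1)%:R].
  by apply: exists_codebook_length => //; rewrite divr_gt0 // ltr0n expn_gt0.
exists (fun k => codebook_cover C (N k) (k.+1%:R * (N k)%:R `^ (- s))); split.
- by move=> k; exact: measurable_codebook_cover.
- by apply: approx_class_sub_codebook_covers => k; have [] := HN k.
move=> k; have [N_gt0 r_lt mass_le] := HN k.
rewrite -lee_fin in mass_le; apply: le_trans mass_le; apply: codebook_cover_le.
by move=> x; apply: ball_le => //; rewrite mulr_gt0 ?powR_gt0 ?ltr0n.
Qed.
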